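(* Let $R,R'$ be commutative rings, $S\subseteq R$ a multiplicatively closed set, and $\phi^*:R\to R'$, $\psi^*:R'\to S^{-1}R$ ring homomorphisms such that $\psi^*(\phi^*(f))=f/1$ for all $f\in R$. Let $I'\subseteq R'$ be a prime ideal with generators $f'_1,\dots,f'_k$, write $\psi^*(f'_i)=g_i/h_i$ with $g_i\in R$, $h_i\in S$, and set $I=(\phi^* )^{-1}(I')$ and $J=\langle g_1,\dots,g_k\rangle\subseteq R$. If $J\subseteq I$ and $I\cap S=\emptyset$, then $I=J:S$.
   Context: For an ideal $J$ and multiplicatively closed set $S$ in $R$, the saturation is $J:S=\{f\in R: fs\in J \text{ for some } s\in S\}$. $S^{-1}R$ is the localization of $R$ at $S$. *)

From mathcomp Require Import all_boot all_algebra.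
Set Implicit Arguments. Unset Strict Implicit. Unset Printing Implicit Defensive.
Import GRing.Theory.
Local Open Scope ring_scope.

Definition mult_closed (R : comPzRingType) (S : R -> Prop) : Prop :=
  S 1 /\ (forall a b, S a -> S b -> S (a * b)).

Definition is_ideal (R : comPzRingType) (I : R -> Prop) : Prop :=
  I 0 /\ (forall a b, I a -> I b -> I (a + b)) /\
  (forall r a, I a -> I (r * a)).

Definition is_prime_ideal (R : comPzRingType) (I : R -> Prop) : Prop :=
  is_ideal I /\ ~ I 1 /\ (forall a b, I (a * b) -> I a \/ I b).

Definition gen_ideal (R : comPzRingType) (k : nat) (g : 'I_k -> R) : R -> Prop :=
  fun x => exists c : 'I_k -> R, x = \sum_(i < k) c i * g i.

Definition saturation (R : comPzRingType) (J S : R -> Prop) : R -> Prop :=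
  fun f => exists s, S s /\ J (f * s).

(* [iota : R -> L] exhibits L as the localization S^{-1}R (iota f = f/1),
   via the standard characterization (Atiyah-Macdonald, Cor. 3.2). *)
Definition is_localization (R L : comPzRingType) (S : R -> Prop)
    (iota : {rmorphism R -> L}) : Prop :=
  [/\ (forall s, S s -> exists u : L, iota s * u = 1),
      (forall x : L, exists a s, S s /\ x * iota s = iota a)
    & (forall a, iota a = 0 -> exists s, S s /\ s * a = 0)].

(* An element f of I maps to psi (phi f) = f/1, which lies in the extension of
   I' = <f'_1, ..., f'_k>; since psi (f'_i) = g_i/h_i, clearing denominators
   gives f/1 = j/s with j in J and s in S, so u (f s - j) = 0 for some u in S
   and f (s u) = u j lies in J.  Conversely, if f s lies in J, hence in I, then
   primality of I and I meeting S trivially force f into I. *)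

From mathcomp Require Import all_boot all_algebra.
From mathcomp Require Import ring.
Local Open Scope ring_scope.
Import GRing.Theory.

Lemma gen_ideal0 (R : comPzRingType) k (g : 'I_k -> R) : gen_ideal g 0.
Proof. by exists (fun _ => 0); rewrite big1 // => i _; rewrite mul0r. Qed.

Lemma gen_idealD (R : comPzRingType) k (g : 'I_k -> R) a b :
  gen_ideal g a -> gen_ideal g b -> gen_ideal g (a + b).
Proof.
move=> [c1 ->] [c2 ->]; exists (fun i => c1 i + c2 i).
by rewrite -big_split /=; apply: eq_bigr => i _; rewrite mulrDl.
Qed.

Lemma gen_idealM (R : comPzRingType) k (g : 'I_k -> R) r a :
  gen_ideal g a -> gen_ideal g (r * a).
Proof.
move=> [c ->]; exists (fun i => r * c i).
by rewrite mulr_sumr; apply: eq_bigr => i _; rewrite mulrA.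
Qed.

Lemma gen_ideal_gen (R : comPzRingType) k (g : 'I_k -> R) i : gen_ideal g (g i).
Proof.
exists (fun j => if j == i then 1 else 0).
rewrite (bigD1 i) //= eqxx mul1r big1 ?addr0 // => j /negPf ->.
by rewrite mul0r.
Qed.

Lemma saturation_sub_prime {R : comPzRingType} {J S P : R -> Prop} :
  (forall a b, P (a * b) -> P a \/ P b) ->
  (forall f, J f -> P f) -> (forall f, P f -> ~ S f) ->
  forall f, saturation J S f -> P f.
Proof.
move=> Pprime JP PS f [s [Ss /JP /Pprime [] // Ps]].
by case: (PS s Ps Ss).
Qed.

Lemma localization_eq {R L : comPzRingType} {S : R -> Prop}
    {iota : {rmorphism R -> L}} {a b : R} :
  is_localization S iota -> iota a = iota b ->
  exists u, S u /\ u * a = u * b.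
Proof.
move=> [_ _ iota_ker] Eab.
have [u [Su Eu]] : exists u, S u /\ u * (a - b) = 0.
  by apply: iota_ker; rewrite rmorphB /= Eab subrr.
by exists u; split=> //; apply/eqP; rewrite -subr_eq0 -mulrBr Eu.
Qed.

Section ClearDenominators.

Variables (R R' L : comPzRingType) (S : R -> Prop).
Variables (iota : {rmorphism R -> L}) (psi : {rmorphism R' -> L}).
Variables (k : nat) (f' : 'I_k -> R') (g h : 'I_k -> R).
Hypotheses (S_mult : mult_closed S) (iota_loc : is_localization S iota).
Hypotheses (Sh : forall i, S (h i))
           (psi_f' : forall i, psi (f' i) * iota (h i) = iota (g i)).

Lemma gen_ideal_clear_denominators x :
  gen_ideal f' x -> exists s j, [/\ S s, gen_ideal g j & psi x * iota s = iota j].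
Proof.
have [_ iota_frac _] := iota_loc; move=> [d ->].
apply: (big_rec (fun y =>
  exists s j, [/\ S s, gen_ideal g j & psi y * iota s = iota j]))
  => [|i y _ [s [j [Ss Jj Ey]]]].
  exists 1, 0; rewrite !rmorph0 mul0r.
  by split; [exact: S_mult.1 | exact: gen_ideal0 |].
(* With psi y = j/s and psi (d i) = a/t, the summand adds (a g_i)/(t h_i). *)
have [a [t [St Et]]] := iota_frac (psi (d i)).
exists (s * (t * h i)), (j * (t * h i) + s * (a * g i)); split.
- by apply: S_mult.2 => //; apply: S_mult.2.
- apply: gen_idealD; first by rewrite mulrC; apply: gen_idealM.
  by do 2 apply: gen_idealM; apply: gen_ideal_gen.
- by rewrite !rmorphD !rmorphM /= -Ey -Et -psi_f'; ring.
Qed.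

End ClearDenominators.

Arguments gen_ideal_clear_denominators {R R' L S iota psi k f' g h} _ _ _ _ {x}.

Theorem lemma4p7 (R R' L : comPzRingType) (S : R -> Prop)
  (iota : {rmorphism R -> L})
  (phi : {rmorphism R -> R'}) (psi : {rmorphism R' -> L})
  (k : nat) (f' : 'I_k -> R') (g h : 'I_k -> R) :
  mult_closed S ->
  is_localization S iota ->
  (forall f : R, psi (phi f) = iota f) ->
  is_prime_ideal (gen_ideal f') ->
  (forall i, S (h i)) ->
  (forall i, psi (f' i) * iota (h i) = iota (g i)) ->
  let I := fun f : R => gen_ideal f' (phi f) in
  let J := gen_ideal g in
  (forall f, J f -> I f) ->
  (forall f, I f -> ~ S f) ->
  forall f, I f <-> saturation J S f.
Proof.
move=> S_mult iota_loc psi_phi [_ [_ I'_prime]] Sh psi_f' I J JI IS f; split.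
  move=> If.
  have [s [j [Ss Jj E]]] :=
    gen_ideal_clear_denominators S_mult iota_loc Sh psi_f' If.
  rewrite psi_phi -rmorphM in E.
  have [u [Su Eu]] := localization_eq iota_loc E.
  exists (s * u); split; first exact: S_mult.2.
  by rewrite mulrA [_ * u]mulrC Eu; apply: gen_idealM.
apply: saturation_sub_prime JI IS f => a b.
by rewrite /I rmorphM; apply: I'_prime.
Qed.
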